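(* Let $G$ be a group with a regular gliding system such that $\dim X_G<\infty$. Then for every set $\mathcal{D}\subset G$ satisfying the square condition and every $A\in\mathcal{D}$, the inclusion-induced homomorphism $\pi_1(X_{\mathcal{D}},A)\to\pi_1(X_G,A)$ is injective.
   Context: Gliding system $(\mathcal{G},\mathcal{I})$ in $G$: $\mathcal{G}\subset G\setminus\{1\}$ closed under inversion (glides), $\mathcal{I}\subset\mathcal{G}\times\mathcal{G}$ (independence) with $(s^{-1},t),(t,s)\in\mathcal{I}$ and $st=ts\ne1$ whenever $(s,t)\in\mathcal{I}$. Pre-cubic set: finite set $S$ of pairwise independent glides, $[S]=\prod_{s\in S}s$; cubic: pre-cubic with $[T_1]\ne[T_2]$ for distinct $T_1,T_2\subset S$; the system is regular if all pre-cubic sets are cubic. Glide complex $X_G$: cubed complex with one $k$-cube for each equivalence class of based cubes $(A,S)$ ($A\in G$, $S$ cubic of size $k$) under $(A,S)\sim([T]A,(S\setminus T)\cup\{t^{-1}:t\in T\})$; vertices $[T]A$ ($T\subset S$), faces the cubes of $(A,S')$, $S'\subset S$. $X_{\mathcal{D}}$: subcomplex of cubes all of whose vertices lie in $\mathcal{D}$. $\mathcal{D}$ satisfies the square condition if for any $A\in\mathcal{D}$ and independent glides $s,t$ with $sA,tA\in\mathcal{D}$ one has $stA\in\mathcal{D}$. *)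

From Stdlib Require Import List Relations.
Import ListNotations.
Set Implicit Arguments.

Record group := Group {
  carrier :> Type;
  mul : carrier -> carrier -> carrier;
  one : carrier;
  inv : carrier -> carrier;
  mulA : forall x y z, mul x (mul y z) = mul (mul x y) z;
  mul1g : forall x, mul one x = x;
  mulg1 : forall x, mul x one = x;
  mulVg : forall x, mul (inv x) x = one;
  mulgV : forall x, mul x (inv x) = one
}.
Arguments mul {g} _ _.
Arguments inv {g} _.
Arguments one g : assert.

Record gliding_system (G : group) := GlidingSystem {
  glide : G -> Prop;
  indep : G -> G -> Prop;
  glide_ne1 : ~ glide (one G);
  glide_inv : forall s, glide s -> glide (inv s);
  indep_glide : forall s t, indep s t -> glide s /\ glide t;
  indep_inv : forall s t, indep s t -> indep (inv s) t;
  indep_sym : forall s t, indep s t -> indep t s;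
  indep_comm : forall s t, indep s t -> mul s t = mul t s;
  indep_ne1 : forall s t, indep s t -> mul s t <> one G
}.

Section Glide.
Variable G : group.
Variable gs : gliding_system G.

Definition gprod (l : list G) : G := fold_right (@mul G) (one G) l.

(* finite sets of glides are represented by duplicate-free lists *)
Definition pre_cubic (S : list G) : Prop :=
  NoDup S /\ (forall s, In s S -> glide gs s) /\
  (forall s t, In s S -> In t S -> s <> t -> indep gs s t).

Definition subset_of (T S : list G) : Prop := NoDup T /\ incl T S.

Definition cubic (S : list G) : Prop :=
  pre_cubic S /\
  forall T1 T2, subset_of T1 S -> subset_of T2 S ->
    gprod T1 = gprod T2 -> forall x, In x T1 <-> In x T2.

Definition regular : Prop := forall S, pre_cubic S -> cubic S.

(* dim X_G < infinity: sizes of cubic sets (= dimensions of cubes) bounded *)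
Definition finite_dim : Prop :=
  exists N : nat, forall S, cubic S -> length S <= N.

Definition square_condition (D : G -> Prop) : Prop :=
  forall A s t, D A -> indep gs s t -> D (mul s A) -> D (mul t A) ->
    D (mul (mul s t) A).

(* 2-skeleton of the subcomplex X_P of X_G spanned by the vertex set P
   (P = everything gives X_G itself). *)

(* B and A span an edge (1-cube (A,{s})) of X_P *)
Definition adj (P : G -> Prop) (A B : G) : Prop :=
  P A /\ P B /\ exists s, cubic [s] /\ B = mul s A.

Fixpoint edge_path (P : G -> Prop) (l : list G) : Prop :=
  match l with
  | [] => False
  | [x] => P x
  | x :: ((y :: _) as r) => adj P x y /\ edge_path P r
  end.

Definition eloop (P : G -> Prop) (A : G) (l : list G) : Prop :=
  edge_path P l /\ hd_error l = Some A /\ last l A = A.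

(* elementary homotopies of edge paths in X_P: backtracking and pushing
   across a square (2-cube (A,{s,t})) of X_P *)
Inductive hstep (P : G -> Prop) : list G -> list G -> Prop :=
| hs_back : forall l1 l2 x y, adj P x y ->
    hstep P (l1 ++ x :: y :: x :: l2) (l1 ++ x :: l2)
| hs_square : forall l1 l2 A s t, cubic [s; t] ->
    P A -> P (mul s A) -> P (mul t A) -> P (mul (mul s t) A) ->
    hstep P (l1 ++ A :: mul s A :: mul (mul s t) A :: l2)
            (l1 ++ A :: mul t A :: mul (mul s t) A :: l2).

Definition htpy (P : G -> Prop) : relation (list G) :=
  clos_refl_sym_trans (list G) (hstep P).

End Glide.

(* Read an edge path A_0, ..., A_n as its word of glides s_i = A_(i+1) A_i^-1.
   Elementary homotopies in X_G become the rewriting steps of a partially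
   commutative cancellation system: delete an adjacent pair s s^-1, or swap two
   adjacent independent glides.  This system is confluent modulo swaps, so two
   loops homotopic in X_G have normal forms that differ only by swaps.  The
   reductions never leave D: a cancellation only drops vertices, and a swap
   replacing A, sA, tsA by A, tA, tsA keeps tA in D by the square condition
   applied at sA to the independent glides s^-1 and t.  Hence both loops
   reduce inside X_D to normal forms joined by squares of X_D.  Only the
   2-skeleton is involved. *)

From Stdlib Require Import List Relations Lia Classical.
Import ListNotations.

Arguments mulA {g} x y z.
Arguments mul1g {g} x.
Arguments mulg1 {g} x.
Arguments mulVg {g} x.
Arguments mulgV {g} x.

Section GroupFacts.
Context {G : group}.

Lemma inv_uniq (a b : G) : mul a b = one G -> b = inv a.
Proof. intro H. rewrite <- (mul1g b), <- (mulVg a), <- mulA, H, mulg1. reflexivity. Qed.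

Lemma invgK (x : G) : inv (inv x) = x.
Proof. symmetry. apply inv_uniq, mulVg. Qed.

Lemma invMg (a b : G) : inv (mul a b) = mul (inv b) (inv a).
Proof.
  symmetry. apply inv_uniq.
  rewrite mulA, <- (mulA a b), mulgV, mulg1, mulgV. reflexivity.
Qed.

Lemma mulgK (a x : G) : mul (mul a x) (inv x) = a.
Proof. rewrite <- mulA, mulgV, mulg1. reflexivity. Qed.

Lemma mulKg (a x : G) : mul (inv a) (mul a x) = x.
Proof. rewrite mulA, mulVg, mul1g. reflexivity. Qed.

Lemma divg_mulr (a b x : G) : mul (mul a x) (inv (mul b x)) = mul a (inv b).
Proof. rewrite invMg, mulA, <- (mulA a x), mulgV, mulg1. reflexivity. Qed.

End GroupFacts.

Section Rewriting.
Context {G : group} (gs : gliding_system G).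
Local Notation indep := (indep gs).

Lemma indep_neq_inv s t : indep s t -> s <> inv t.
Proof. intros H E. apply (indep_ne1 gs s t H). subst. apply mulVg. Qed.

Lemma not_indep_inv x : ~ indep x (inv x).
Proof. intro H. apply (indep_neq_inv _ _ H). rewrite invgK. reflexivity. Qed.

Inductive swap : list G -> list G -> Prop :=
| swap_here a b w : indep a b -> a <> b -> swap (a :: b :: w) (b :: a :: w)
| swap_cons c u v : swap u v -> swap (c :: u) (c :: v).

Inductive cancel_pair : list G -> list G -> Prop :=
| cancel_here x w : cancel_pair (x :: inv x :: w) w
| cancel_cons c u v : cancel_pair u v -> cancel_pair (c :: u) (c :: v).

Definition reduction_step u v := swap u v \/ cancel_pair u v.
Definition reduces := clos_refl_trans _ reduction_step.
Definition reduction_equiv := clos_refl_sym_trans _ reduction_step.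
Definition swap_equiv := clos_refl_sym_trans _ swap.
Definition joinable u v := exists z, reduces u z /\ reduces v z.

(* [v] is [u] with a letter [inv x] removed, every earlier letter being
   independent of and distinct from [x]: so [x :: u] reduces to [v]. *)
Inductive cancel_past (x : G) : list G -> list G -> Prop :=
| cancel_past_here w : cancel_past x (inv x :: w) w
| cancel_past_cons c u v : indep c x -> c <> x ->
    cancel_past x u v -> cancel_past x (c :: u) (c :: v).

(* A cancellation that becomes a [cancel_pair] after some swaps; unlike
   [cancel_pair], it is transported along swaps. *)
Inductive cancel_mod_swap : list G -> list G -> Prop :=
| cancel_mod_swap_here x u v : cancel_past x u v -> cancel_mod_swap (x :: u) v
| cancel_mod_swap_cons c u v : cancel_mod_swap u v -> cancel_mod_swap (c :: u) (c :: v).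

Lemma swap_sym u v : swap u v -> swap v u.
Proof. induction 1; constructor; auto. apply indep_sym; assumption. Qed.

Lemma swap_length u v : swap u v -> length u = length v.
Proof. induction 1; simpl; auto. Qed.

Lemma swap_equiv_length u v : swap_equiv u v -> length u = length v.
Proof. induction 1; eauto using swap_length, eq_sym, eq_trans. Qed.

Lemma swap_equiv_rt1n u v :
  swap_equiv u v -> clos_refl_trans_1n _ swap u v.
Proof.
  intro H. apply clos_rst_rst1n in H. induction H; [constructor |].
  destruct H as [H | H]; econstructor; eauto using swap_sym.
Qed.

Lemma reduces_swap u v : swap u v -> reduces u v.
Proof. intro H. apply rt_step. left. exact H. Qed.

Lemma reduces_cancel u v : cancel_pair u v -> reduces u v.
Proof. intro H. apply rt_step. right. exact H. Qed.

Lemma reduces_cons c u v : reduces u v -> reduces (c :: u) (c :: v).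
Proof.
  induction 1; [| apply rt_refl | eapply rt_trans; eauto].
  apply rt_step. destruct H; [left | right]; constructor; assumption.
Qed.

Lemma swap_equiv_reduces u v : swap_equiv u v -> reduces u v.
Proof.
  intro H. apply swap_equiv_rt1n in H. induction H; [apply rt_refl |].
  eapply rt_trans; [apply reduces_swap |]; eassumption.
Qed.

Lemma cancel_past_reduces x u v : cancel_past x u v -> reduces (x :: u) v.
Proof.
  induction 1; [apply reduces_cancel; constructor |].
  eapply rt_trans; [apply reduces_swap; constructor | apply reduces_cons; eauto].
  - apply indep_sym; assumption.
  - auto.
Qed.

Lemma cancel_past_restore x u v : cancel_past x u v -> reduces (inv x :: v) u.
Proof.
  induction 1; [apply rt_refl |].
  eapply rt_trans; [apply reduces_swap; constructor | apply reduces_cons; eauto].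
  - apply indep_inv, indep_sym; assumption.
  - intro E. apply (indep_neq_inv _ _ H). auto.
Qed.

Lemma cancel_mod_swap_reduces u v : cancel_mod_swap u v -> reduces u v.
Proof. induction 1; auto using cancel_past_reduces, reduces_cons. Qed.

Lemma cancel_pair_mod_swap u v : cancel_pair u v -> cancel_mod_swap u v.
Proof. induction 1; repeat constructor; assumption. Qed.

Lemma cancel_past_length x u v : cancel_past x u v -> length u = S (length v).
Proof. induction 1; simpl; auto. Qed.

Lemma cancel_mod_swap_length u v :
  cancel_mod_swap u v -> length u = S (S (length v)).
Proof. induction 1; simpl; auto. erewrite cancel_past_length; eauto. Qed.

Lemma cancel_pair_length u v : cancel_pair u v -> length u = S (S (length v)).
Proof. auto using cancel_mod_swap_length, cancel_pair_mod_swap. Qed.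

Lemma cancel_past_cancel_pair_join x w d1 d2 :
  cancel_past x w d1 -> cancel_pair w d2 -> joinable d1 (x :: d2).
Proof.
  intro H; revert d2; induction H as [w | c u v Hcx Hnx H IH]; intros d2 Hw.
  - inversion Hw; subst.
    + rewrite invgK in *. exists (x :: d2). split; apply rt_refl.
    + exists v. split; [apply reduces_cancel; assumption |].
      apply reduces_cancel. constructor.
  - inversion Hw as [y w' | c' u' v' Hu]; subst.
    + inversion H; subst.
      * exfalso. apply Hnx. rewrite <- (invgK c), <- H1, invgK. reflexivity.
      * exists v0. split; [apply reduces_cancel; constructor |].
        apply cancel_past_reduces; assumption.
    + destruct (IH _ Hu) as [z [Z1 Z2]]. exists (c :: z). split.
      * apply reduces_cons; assumption.
      * eapply rt_trans; [apply reduces_swap; constructor | apply reduces_cons; eauto].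
        -- apply indep_sym; assumption.
        -- auto.
Qed.

Lemma cancel_mod_swap_cancel_pair_join w d1 d2 :
  cancel_mod_swap w d1 -> cancel_pair w d2 -> joinable d1 d2.
Proof.
  intro H; revert d2; induction H as [x u v H | c u v H IH]; intros d2 Hw.
  - inversion Hw; subst.
    + inversion H; subst.
      * eexists. split; apply rt_refl.
      * exfalso. exact (not_indep_inv x (indep_sym gs _ _ H2)).
    + eapply cancel_past_cancel_pair_join; eauto.
  - inversion Hw as [? ? | c' u' v' Hu]; subst.
    + inversion H; subst.
      * exists d2. split; [| apply rt_refl].
        rewrite <- (invgK c). apply cancel_past_restore. assumption.
      * exists v0. split.
        -- apply reduces_cancel. constructor.
        -- apply cancel_mod_swap_reduces. assumption.
    + destruct (IH _ Hu) as [z [Z1 Z2]].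
      exists (c :: z). split; apply reduces_cons; assumption.
Qed.

Lemma swap_cancel_past x w w' d :
  swap w w' -> cancel_past x w d -> exists d', cancel_past x w' d' /\ reduces d d'.
Proof.
  intro H; revert d; induction H as [a b r Hab Nab | c u v H IH]; intros d Hd.
  - inversion Hd as [r' | c u v Hax Nax Hu]; subst.
    + exists (b :: r). split; [| apply rt_refl]. constructor.
      * apply indep_sym. rewrite <- (invgK x). apply indep_inv. assumption.
      * intro E. subst. exact (not_indep_inv x (indep_sym gs _ _ Hab)).
      * constructor.
    + inversion Hu; subst.
      * exists (a :: v). split; [constructor | apply rt_refl].
      * exists (b :: a :: v0). split; [repeat constructor; assumption |].
        apply reduces_swap. constructor; assumption.
  - inversion Hd as [? | ? ? v0 Hcx Ncx Hv]; subst.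
    + exists v. split; [constructor | apply reduces_swap; assumption].
    + destruct (IH _ Hv) as [d' [D1 D2]]. exists (c :: d').
      split; [constructor |]; auto using reduces_cons.
Qed.

Lemma swap_cancel_mod_swap w w' d :
  swap w w' -> cancel_mod_swap w d -> exists d', cancel_mod_swap w' d' /\ reduces d d'.
Proof.
  intro H; revert d; induction H as [a b r Hab Nab | c u v H IH]; intros d Hd.
  - inversion Hd as [? ? d0 Hr | ? ? d0 Hr]; subst.
    + inversion Hr as [? | ? ? d1 Hba Nba Hr']; subst.
      * exfalso. exact (not_indep_inv a Hab).
      * exists (b :: d1). split; [| apply rt_refl].
        apply cancel_mod_swap_cons. constructor. assumption.
    + inversion Hr as [? ? ? Hr' | ? ? d1 Hr']; subst.
      * exists (a :: d0). split; [| apply rt_refl]. repeat constructor; auto.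
      * exists (b :: a :: d1). split.
        -- do 2 apply cancel_mod_swap_cons. assumption.
        -- apply reduces_swap. constructor; assumption.
  - inversion Hd as [x u' v' Hu | c' u' v' Hu]; subst.
    + destruct (swap_cancel_past _ _ _ _ H Hu) as [d' [D1 D2]].
      exists d'. split; [constructor |]; assumption.
    + destruct (IH _ Hu) as [d' [D1 D2]]. exists (c :: d').
      split; [apply cancel_mod_swap_cons | apply reduces_cons]; assumption.
Qed.

Lemma swap_equiv_cancel_mod_swap w w' d :
  swap_equiv w w' -> cancel_mod_swap w d ->
  exists d', cancel_mod_swap w' d' /\ reduces d d'.
Proof.
  intro H. apply swap_equiv_rt1n in H. revert d.
  induction H as [| u v w Huv _ IH]; intros d Hd.
  - exists d. split; [assumption | apply rt_refl].
  - destruct (swap_cancel_mod_swap _ _ _ Huv Hd) as [d1 [D1 D2]].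
    destruct (IH _ D1) as [d2 [E1 E2]].
    exists d2. split; [| eapply rt_trans]; eauto.
Qed.

Lemma reduces_split u n :
  reduces u n ->
  swap_equiv u n \/
  exists u1 a, swap_equiv u u1 /\ cancel_pair u1 a /\ reduces a n.
Proof.
  intro H. apply clos_rt_rt1n in H.
  induction H as [| x y z [Hxy | Hxy] Hyz IH].
  - left. apply rst_refl.
  - destruct IH as [E | [u1 [a [E1 [E2 E3]]]]].
    + left. eapply rst_trans; [apply rst_step |]; eassumption.
    + right. exists u1, a. split; [eapply rst_trans; [apply rst_step |] |]; eauto.
  - right. exists x, y. split; [apply rst_refl |].
    split; [| apply clos_rt1n_rt]; assumption.
Qed.

Definition irreducible w := forall d, ~ cancel_mod_swap w d.
Definition normal_form u n := reduces u n /\ irreducible n.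

Lemma normal_form_exists u : exists n, normal_form u n.
Proof.
  induction u as [u IH]
    using (well_founded_induction (Wf_nat.well_founded_ltof _ (@length G))).
  destruct (classic (exists d, cancel_mod_swap u d)) as [[d Hd] | Hirr].
  - destruct (IH d) as [n [Hn Irr]].
    + unfold Wf_nat.ltof. rewrite (cancel_mod_swap_length _ _ Hd). lia.
    + exists n. split; [| assumption].
      eapply rt_trans; [apply cancel_mod_swap_reduces |]; eassumption.
  - exists u. split; [apply rt_refl |]. intros d Hd. apply Hirr. eauto.
Qed.

Lemma swap_equiv_irreducible u n a :
  swap_equiv u n -> irreducible n -> ~ cancel_pair u a.
Proof.
  intros E Irr Hu.
  destruct (swap_equiv_cancel_mod_swap _ _ _ E (cancel_pair_mod_swap _ _ Hu))
    as [d [Hd _]].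
  exact (Irr d Hd).
Qed.

(* Newman's lemma modulo swaps, by induction on the length of the word. *)
Lemma normal_form_unique u n1 n2 :
  normal_form u n1 -> normal_form u n2 -> swap_equiv n1 n2.
Proof.
  revert n1 n2.
  induction u as [u IH]
    using (well_founded_induction (Wf_nat.well_founded_ltof _ (@length G))).
  intros n1 n2 [R1 I1] [R2 I2].
  destruct (reduces_split _ _ R1) as [E1 | [u1 [a1 [E1 [C1 R1']]]]];
  destruct (reduces_split _ _ R2) as [E2 | [u2 [a2 [E2 [C2 R2']]]]].
  - eapply rst_trans; [apply rst_sym |]; eassumption.
  - exfalso. apply (swap_equiv_irreducible u2 n1 a2); [| assumption | assumption].
    eapply rst_trans; [apply rst_sym |]; eassumption.
  - exfalso. apply (swap_equiv_irreducible u1 n2 a1); [| assumption | assumption].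
    eapply rst_trans; [apply rst_sym |]; eassumption.
  - assert (E12 : swap_equiv u1 u2) by (eapply rst_trans; [apply rst_sym |]; eassumption).
    destruct (swap_equiv_cancel_mod_swap _ _ _ E12 (cancel_pair_mod_swap _ _ C1))
      as [d [D1 D2]].
    destruct (cancel_mod_swap_cancel_pair_join _ _ _ D1 C2) as [z [Z1 Z2]].
    destruct (normal_form_exists z) as [m [M1 M2]].
    assert (L1 : Wf_nat.ltof _ (@length G) a1 u).
    { unfold Wf_nat.ltof. rewrite (swap_equiv_length _ _ E1), (cancel_pair_length _ _ C1). lia. }
    assert (L2 : Wf_nat.ltof _ (@length G) a2 u).
    { unfold Wf_nat.ltof. rewrite (swap_equiv_length _ _ E2), (cancel_pair_length _ _ C2). lia. }
    assert (N1 : swap_equiv n1 m).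
    { apply (IH a1 L1); split; try assumption.
      eapply rt_trans; [eassumption | eapply rt_trans; eassumption]. }
    assert (N2 : swap_equiv n2 m).
    { apply (IH a2 L2); split; try assumption. eapply rt_trans; eassumption. }
    eapply rst_trans; [| apply rst_sym]; eassumption.
Qed.

Lemma reduction_equiv_normal_form u v n1 n2 :
  reduction_equiv u v -> normal_form u n1 -> normal_form v n2 -> swap_equiv n1 n2.
Proof.
  intro H. revert n1 n2.
  induction H as [x y Hxy | x | x y _ IH | x y z _ IH1 _ IH2]; intros n1 n2 N1 N2.
  - apply (normal_form_unique x); [assumption |].
    destruct N2 as [R2 I2]. split; [eapply rt_trans; [apply rt_step |] |]; eassumption.
  - eapply normal_form_unique; eassumption.
  - apply rst_sym. apply IH; assumption.
  - destruct (normal_form_exists y) as [m M].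
    eapply rst_trans; [apply IH1 | apply IH2]; eassumption.
Qed.

End Rewriting.

Section Paths.
Context {G : group} (gs : gliding_system G).

Fixpoint vpath (A : G) (w : list G) : list G :=
  A :: match w with [] => [] | s :: w' => vpath (mul s A) w' end.

Fixpoint word_of (l : list G) : list G :=
  match l with
  | x :: ((y :: _) as r) => mul y (inv x) :: word_of r
  | _ => []
  end.

Lemma vpath_unfold A w : vpath A w = A :: tl (vpath A w).
Proof. destruct w; reflexivity. Qed.

Lemma word_of_app l x r : word_of (l ++ x :: r) = word_of (l ++ [x]) ++ word_of (x :: r).
Proof.
  induction l as [| a l IH]; [reflexivity |].
  destruct l as [| b l]; [reflexivity |].
  simpl in IH |- *. rewrite IH. reflexivity.
Qed.

Lemma reduction_step_app c u v :
  reduction_step gs u v -> reduction_step gs (c ++ u) (c ++ v).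
Proof.
  intro H. induction c as [| a c IH]; [exact H |].
  destruct IH; [left | right]; constructor; assumption.
Qed.

Lemma cubic_pair_indep s t : cubic gs [s; t] -> indep gs s t /\ s <> t.
Proof.
  intros [[Hnd [_ Hind]] _].
  assert (Nst : s <> t) by (intro E; subst; inversion Hnd; simpl in *; tauto).
  split; [apply Hind; simpl |]; auto.
Qed.

Lemma cubic_single_glide s : cubic gs [s] -> glide gs s.
Proof. intros [[_ [H _]] _]. apply H. simpl. auto. Qed.

Lemma hstep_reduction_step P l l' :
  hstep gs P l l' -> reduction_step gs (word_of l) (word_of l').
Proof.
  intros [l1 l2 x y _ | l1 l2 A s t Hst _ _ _ _].
  - rewrite (word_of_app l1 x (y :: x :: l2)), (word_of_app l1 x l2).
    apply reduction_step_app. right. simpl.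
    replace (mul x (inv y)) with (inv (mul y (inv x)))
      by (rewrite invMg, invgK; reflexivity).
    constructor.
  - rewrite (word_of_app l1 A), (word_of_app l1 A (mul t A :: _)).
    apply reduction_step_app. left. simpl.
    destruct (cubic_pair_indep s t Hst) as [Hind Nst].
    rewrite !mulgK, !divg_mulr.
    rewrite (indep_comm gs s t Hind), mulgK, <- (indep_comm gs s t Hind), mulgK.
    constructor; assumption.
Qed.

Lemma htpy_reduction_equiv P l l' :
  htpy gs P l l' -> reduction_equiv gs (word_of l) (word_of l').
Proof.
  induction 1.
  - apply rst_step. eapply hstep_reduction_step. eassumption.
  - apply rst_refl.
  - apply rst_sym. assumption.
  - eapply rst_trans; eassumption.
Qed.

Lemma edge_path_vpath P l A :
  edge_path gs P l -> hd_error l = Some A ->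
  l = vpath A (word_of l) /\ Forall P l /\ Forall (glide gs) (word_of l).
Proof.
  revert A. induction l as [| x l IH]; intros A Hl Hhd; [destruct Hl |].
  injection Hhd as <-. destruct l as [| y l]; [repeat constructor; assumption |].
  destruct Hl as [[Px [Py [s [Hs ->]]]] Hl].
  destruct (IH (mul s x) Hl eq_refl) as [E [HP HG]].
  simpl word_of. rewrite mulgK. split; [| split].
  - simpl. f_equal. exact E.
  - constructor; assumption.
  - constructor; [apply cubic_single_glide |]; assumption.
Qed.

End Paths.

Section Lifting.
Context {G : group} (gs : gliding_system G).
Hypothesis Hreg : regular gs.
Variable D : G -> Prop.

Lemma regular_cubic_single s : glide gs s -> cubic gs [s].
Proof.
  intro Hs. apply Hreg. split; [| split].
  - repeat constructor. simpl. tauto.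
  - intros x [<- | []]. exact Hs.
  - intros x y [<- | []] [<- | []] N. congruence.
Qed.

Lemma regular_cubic_pair s t : indep gs s t -> s <> t -> cubic gs [s; t].
Proof.
  intros Hst Nst. destruct (indep_glide gs s t Hst) as [Hs Ht].
  apply Hreg. split; [| split].
  - repeat constructor; simpl; intuition.
  - intros x [<- | [<- | []]]; assumption.
  - intros x y [<- | [<- | []]] [<- | [<- | []]] N;
      solve [congruence | assumption | apply indep_sym; assumption].
Qed.

Lemma hstep_cons X l l' : hstep gs D l l' -> hstep gs D (X :: l) (X :: l').
Proof.
  intros [l1 l2 x y Hxy | l1 l2 A s t Hst HA Hs Ht Hst'].
  - exact (hs_back (X :: l1) l2 Hxy).
  - exact (hs_square D (X :: l1) l2 A Hst HA Hs Ht Hst').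
Qed.

Definition word_in A w := Forall D (vpath A w) /\ Forall (glide gs) w.

Lemma word_in_cons A c w :
  word_in A (c :: w) <-> D A /\ glide gs c /\ word_in (mul c A) w.
Proof.
  unfold word_in. simpl vpath. rewrite !Forall_cons_iff. tauto.
Qed.

Lemma word_in_head A w : word_in A w -> D A.
Proof. intros [H _]. rewrite vpath_unfold in H. exact (Forall_inv H). Qed.

Lemma cancel_lift w w' : cancel_pair w w' -> forall A,
  word_in A w -> word_in A w' /\ hstep gs D (vpath A w) (vpath A w').
Proof.
  induction 1 as [x r | c u v H IH]; intros A Hw.
  - apply word_in_cons in Hw as [DA [Gx Hw]].
    apply word_in_cons in Hw as [DxA [_ Hr]]. rewrite mulKg in Hr.
    split; [exact Hr |].
    change (vpath A (x :: inv x :: r))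
      with (A :: mul x A :: vpath (mul (inv x) (mul x A)) r).
    rewrite mulKg, (vpath_unfold A r).
    apply (hs_back [] (tl (vpath A r))).
    split; [| split]; [assumption | assumption |].
    exists x. split; [apply regular_cubic_single |]; auto.
  - apply word_in_cons in Hw as [DA [Gc Hu]].
    destruct (IH _ Hu) as [Hv Hstep].
    split; [apply word_in_cons; auto | apply hstep_cons; exact Hstep].
Qed.

Hypothesis Hsq : square_condition gs D.

Lemma swap_lift w w' : swap gs w w' -> forall A,
  word_in A w -> word_in A w' /\ hstep gs D (vpath A w) (vpath A w').
Proof.
  induction 1 as [a b r Hab Nab | c u v H IH]; intros A Hw.
  - assert (EaX : mul b (mul a A) = mul (mul a b) A)
      by (rewrite mulA, (indep_comm gs a b Hab); reflexivity).
    assert (EbX : mul a (mul b A) = mul (mul a b) A) by apply mulA.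
    apply word_in_cons in Hw as [DA [Ga Hw]].
    apply word_in_cons in Hw as [DaA [Gb Hr]]. rewrite EaX in Hr.
    assert (DbA : D (mul b A)).
    { replace (mul b A) with (mul (mul (inv a) b) (mul a A))
        by (rewrite <- mulA, (mulA b a), <- (indep_comm gs a b Hab), <- mulA, mulKg;
            reflexivity).
      apply Hsq; [assumption | apply indep_inv; assumption | rewrite mulKg; assumption |].
      rewrite EaX. exact (word_in_head _ _ Hr). }
    split.
    + apply word_in_cons. split; [| split]; [assumption | assumption |].
      apply word_in_cons. rewrite EbX. auto.
    + change (vpath A (a :: b :: r))
        with (A :: mul a A :: vpath (mul b (mul a A)) r).
      change (vpath A (b :: a :: r))
        with (A :: mul b A :: vpath (mul a (mul b A)) r).
      rewrite EaX, EbX, vpath_unfold.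
      apply (hs_square D [] (tl (vpath (mul (mul a b) A) r)) A);
        [apply regular_cubic_pair | | | | exact (word_in_head _ _ Hr)]; assumption.
  - apply word_in_cons in Hw as [DA [Gc Hu]].
    destruct (IH _ Hu) as [Hv Hstep].
    split; [apply word_in_cons; auto | apply hstep_cons; exact Hstep].
Qed.

Lemma reduces_lift w w' : reduces gs w w' -> forall A,
  word_in A w -> word_in A w' /\ htpy gs D (vpath A w) (vpath A w').
Proof.
  induction 1 as [u v [Huv | Huv] | u | u v z _ IH1 _ IH2]; intros A Hu.
  - destruct (swap_lift _ _ Huv A Hu). split; [| apply rst_step]; assumption.
  - destruct (cancel_lift _ _ Huv A Hu). split; [| apply rst_step]; assumption.
  - split; [assumption | apply rst_refl].
  - destruct (IH1 A Hu) as [Hv H1]. destruct (IH2 A Hv) as [Hz H2].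
    split; [| eapply rst_trans]; eassumption.
Qed.

End Lifting.

Theorem corollary5p2 (G : group) (gs : gliding_system G) :
  regular gs -> finite_dim gs ->
  forall (D : G -> Prop), square_condition gs D ->
  forall A : G, D A ->
  forall p q : list G, eloop gs D A p -> eloop gs D A q ->
    htpy gs (fun _ => True) p q -> htpy gs D p q.
Proof.
  intros Hreg _ D Hsq A _ p q [Pp [Hp _]] [Pq [Hq _]] Hpq.
  destruct (edge_path_vpath gs D p A Pp Hp) as [Ep [Dp Gp]].
  destruct (edge_path_vpath gs D q A Pq Hq) as [Eq [Dq Gq]].
  rewrite Ep in Dp. rewrite Eq in Dq.
  destruct (normal_form_exists gs (word_of p)) as [np [Rp Ip]].
  destruct (normal_form_exists gs (word_of q)) as [nq [Rq Iq]].
  assert (Enpq : swap_equiv gs np nq).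
  { eapply reduction_equiv_normal_form; [| split | split]; try eassumption.
    eapply htpy_reduction_equiv. exact Hpq. }
  destruct (reduces_lift gs Hreg D Hsq _ _ Rp A (conj Dp Gp)) as [Dnp Hp'].
  destruct (reduces_lift gs Hreg D Hsq _ _ Rq A (conj Dq Gq)) as [_ Hq'].
  destruct (reduces_lift gs Hreg D Hsq _ _ (swap_equiv_reduces gs _ _ Enpq) A Dnp)
    as [_ Hnpq].
  rewrite Ep, Eq.
  eapply rst_trans; [exact Hp' | eapply rst_trans; [exact Hnpq | apply rst_sym; exact Hq']].
Qed.
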